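(* For integers $i\ge 0$ and $j\ge 0$, let $g^{(2)}_{i,j}$ be the number of 2-generalized grand Motzkin paths of length $i$ and height $j$. Then for every $j\ge 0$, $$M^{(j)}(x):=\sum_{i\ge 0} g^{(2)}_{i,j}x^i=\frac{F(x)^{j+1}\,C\big(F(x)^2\big)^j}{x\big(1-2F(x)^2C(F(x)^2)\big)},$$ where $F(x)=\frac{x}{1-x-x^2}$ and $C(x)=\frac{1-\sqrt{1-4x}}{2x}$. Moreover, for $0\le j\le i$, $$g^{(2)}_{i,j}=\sum_{m=0}^{i}\sum_{l=0}^{i-j-2m}\binom{2m+j}{m}\binom{l+j+2m}{l}\binom{l}{i-j-2m-l}.$$
   Context: A 2-generalized grand Motzkin path of length $n$ is a lattice path in $\mathbb{Z}\times\mathbb{Z}$ starting at $(0,0)$ and ending at a point with $x$-coordinate $n$, using steps $U=(1,1)$, $D=(1,-1)$, $H=(1,0)$ and $H_2=(2,0)$, with no restriction of staying above the $x$-axis. Its height is its final $y$-coordinate. $F(x)$ is the generating function of the Fibonacci numbers and $C(x)$ that of the Catalan numbers; $C(F(x)^2)$ denotes composition of formal power series. Sums with upper limit smaller than the lower limit are empty. *)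

From HB Require Import structures.
From mathcomp Require Import all_boot all_order all_algebra.
Set Implicit Arguments. Unset Strict Implicit. Unset Printing Implicit Defensive.
Import Order.TTheory GRing.Theory Num.Theory.

(* Steps of a 2-generalized grand Motzkin path:
   U=(1,1), D=(1,-1), H=(1,0), H2=(2,0). *)
Inductive step := U | D | H | H2.

Definition step_code (s : step) : nat :=
  match s with U => 0 | D => 1 | H => 2 | H2 => 3 end.
Definition step_decode (n : nat) : option step :=
  match n with 0 => Some U | 1 => Some D | 2 => Some H | 3 => Some H2 | _ => None end.
Lemma step_codeK : pcancel step_code step_decode.
Proof. by case. Qed.

HB.instance Definition _ := Equality.copy step (pcan_type step_codeK).
HB.instance Definition _ := Choice.copy step (pcan_type step_codeK).
HB.instance Definition _ := Countable.copy step (pcan_type step_codeK).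

Definition step_enum : seq step := [:: U; D; H; H2].
Lemma step_enumP : Finite.axiom step_enum.
Proof. by case. Qed.
HB.instance Definition _ := isFinite.Build step step_enumP.

Definition step_dx (s : step) : nat := match s with H2 => 2 | _ => 1 end.
Definition step_dy (s : step) : int :=
  (match s with U => 1 | D => -1 | _ => 0 end)%R.

(* A path is a sequence of steps starting at (0,0); its length is the final
   x-coordinate and its height the final y-coordinate. *)
Definition plen (p : seq step) : nat := \sum_(s <- p) step_dx s.
Definition pheight (p : seq step) : int := (\sum_(s <- p) step_dy s)%R.

(* A path of length i has at most i steps, so we count, for each
   number of steps k <= i, the k-tuples of steps with the right endpoint. *)
Definition g2 (i j : nat) : nat :=
  \sum_(k < i.+1)
     #|[set t : k.-tuple step | (plen t == i) && (pheight t == (j%:Z)%R)]|.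

Definition series := nat -> int.

Local Open Scope ring_scope.

Definition mulS (a b : series) : series :=
  fun n => \sum_(k < n.+1) a k * b (n - k)%N.
Definition addS (a b : series) : series := fun n => a n + b n.
Definition scaleS (c : int) (a : series) : series := fun n => c * a n.
Definition oneS : series := fun n => (n == 0%N)%:R.
Definition xS : series := fun n => (n == 1%N)%:R.
Definition powS (a : series) (k : nat) : series := iter k (mulS a) oneS.
(* composition c(g), meaningful when g 0 = 0 *)
Definition compS (c g : series) : series :=
  fun n => \sum_(k < n.+1) c k * powS g k n.

Fixpoint fib (n : nat) : nat :=
  match n with
  | 0 => 0
  | 1 => 1
  | (m.+1 as p).+1 => fib p + fib m
  end%N.
Definition catalan (n : nat) : nat := ('C(n.*2, n) %/ n.+1)%N.

(* F(x) = x/(1-x-x^2), generating function of the Fibonacci numbers *)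
Definition Fser : series := fun n => (fib n)%:Z.
(* C(x) = (1 - sqrt(1-4x))/(2x), generating function of the Catalan numbers *)
Definition Cser : series := fun n => (catalan n)%:Z.

Definition Mser (j : nat) : series := fun i => (g2 i j)%:Z.

(* Splitting off the first step, the height-y generating functions A_y of
   grand Motzkin paths satisfy (1 - x - x^2) A_y = [y = 0] + x (A_(y-1) + A_(y+1)).
   Since 1 - x - x^2 has constant term 1, this system determines all
   coefficients recursively, so any solution is the solution.  With
   F = x/(1 - x - x^2) and v = F C(F^2), the Catalan equation C = 1 + x C^2
   gives v = F + F v^2, and then F v^|y| / (x (1 - 2 F v)) is a solution; so is
   the sum over m of binom(2m + |y|, m) F^(2m + |y| + 1) / x, whose coefficients
   are the stated binomial sums.  Power series are compared through their
   truncations below degree N, for every N. *)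

From mathcomp Require Import all_boot all_order all_algebra.
From mathcomp Require Import ring zify.
Set Implicit Arguments.
Unset Strict Implicit.
Unset Printing Implicit Defensive.
Import GRing.Theory Num.Theory.

Definition npaths k i (y : int) : nat :=
  \sum_(t : k.-tuple step) ((plen t == i) && (pheight t == y)).

Definition gmotzkin i y : nat := \sum_(k < i.+1) npaths k i y.

Lemma g2E i j : g2 i j = gmotzkin i j.
Proof.
apply: eq_bigr => k _; rewrite cardsE -sum1_card big_mkcond /=.
by apply: eq_bigr => t _; rewrite unfold_in; case: ifP.
Qed.

Lemma sum_step (F : step -> nat) : \sum_(s : step) F s = F U + F D + F H + F H2.
Proof. by rewrite /index_enum !unlock /= addn0 !addnA. Qed.

Lemma npaths0 i y : npaths 0 i y = ((i == 0) && (y == 0%R)).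
Proof.
rewrite /npaths (eq_bigr (fun _ => ((i == 0) && (y == 0%R)) : nat)).
  by rewrite big_const card_tuple /= addn0.
by move=> t _; rewrite tuple0 /plen /pheight !big_nil eq_sym [y == _]eq_sym.
Qed.

Lemma npathsS k i y : npaths k.+1 i y =
  \sum_(s : step) (if step_dx s <= i then npaths k (i - step_dx s) (y - step_dy s)%R
                   else 0).
Proof.
rewrite /npaths (reindex (fun p : step * k.-tuple step => [tuple of p.1 :: p.2])) /=.
  rewrite -(pair_big xpredT xpredT (fun s (t : k.-tuple step) =>
    ((plen [tuple of s :: t] == i) && (pheight [tuple of s :: t] == y) : nat))) /=.
  apply: eq_bigr => s _; rewrite /plen /pheight.
  case: leqP => [le_si|lt_is].
    apply: eq_bigr => t _; rewrite !big_cons; congr (nat_of_bool (_ && _)).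
      by apply/eqP/eqP; lia.
    by apply/eqP/eqP => [<-|->]; ring.
  by apply: big1 => t _; rewrite big_cons; case: eqP => //= len_i; move: lt_is; lia.
exists (fun t : k.+1.-tuple step => (thead t, [tuple of behead t])).
  by move=> [s t] _ /=; rewrite theadE; congr pair; apply: val_inj.
by move=> t _ /=; rewrite -tuple_eta.
Qed.

Lemma npaths_gt k i y : i < k -> npaths k i y = 0.
Proof.
elim: k i y => [//|k IH] i y lt_ik; rewrite npathsS sum_step /=.
apply/eqP; rewrite !addn_eq0 -!andbA; apply/and4P.
by split; case: ifP => // le_si; rewrite IH //; lia.
Qed.

Lemma gmotzkin_widen K i y : i < K -> gmotzkin i y = \sum_(k < K) npaths k i y.
Proof.
move=> lt_iK; rewrite /gmotzkin (big_ord_widen K (fun k => npaths k i y) lt_iK).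
by rewrite big_mkcond; apply: eq_bigr => -[k /= _] _; case: ltnP => // /npaths_gt ->.
Qed.

Lemma gmotzkin0 y : gmotzkin 0 y = (y == 0%R).
Proof. by rewrite /gmotzkin big_ord1 npaths0. Qed.

Lemma gmotzkinS i y : gmotzkin i.+1 y =
  gmotzkin i (y - 1)%R + gmotzkin i (y + 1)%R + gmotzkin i y
  + (if i is i'.+1 then gmotzkin i' y else 0).
Proof.
rewrite /gmotzkin big_ord_recl npaths0 add0n.
under eq_bigr => k _ do rewrite npathsS.
rewrite exchange_big sum_step /= !subSS !subn0 opprK subr0.
case: i => [|i] /=; first by rewrite big1_eq.
by rewrite subn1 /= -(gmotzkin_widen y (leqnSn i.+1)).
Qed.

Local Open Scope ring_scope.

Local Open Scope ring_scope.

Section TruncatedEquality.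
Context {R : comNzRingType}.
Implicit Types (N : nat) (p q h : {poly R}).

Definition eq_upto N p q := take_poly N p = take_poly N q.

Lemma eq_uptoP N p q : eq_upto N p q <-> forall k, (k < N)%N -> p`_k = q`_k.
Proof.
split=> [e k lt_kN | e].
  by have := congr1 (fun r : {poly R} => r`_k) e; rewrite /= !coef_take_poly lt_kN.
by apply/polyP => k; rewrite !coef_take_poly; case: ifP => // /e.
Qed.

Lemma eq_uptoD N p q p' q' :
  eq_upto N p p' -> eq_upto N q q' -> eq_upto N (p + q) (p' + q').
Proof. by rewrite /eq_upto !take_polyD => -> ->. Qed.

Lemma eq_uptoN N p q : eq_upto N p q -> eq_upto N (- p) (- q).
Proof. by move/eq_uptoP=> e; apply/eq_uptoP => k lt_kN; rewrite !coefN e. Qed.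

Lemma eq_uptoB N p q p' q' :
  eq_upto N p p' -> eq_upto N q q' -> eq_upto N (p - q) (p' - q').
Proof. by move=> e1 /eq_uptoN; apply: eq_uptoD. Qed.

Lemma eq_uptoM N p q p' q' :
  eq_upto N p p' -> eq_upto N q q' -> eq_upto N (p * q) (p' * q').
Proof.
move=> /eq_uptoP e1 /eq_uptoP e2; apply/eq_uptoP => k lt_kN.
rewrite !coefM; apply: eq_bigr => -[i /= lt_ik] _.
by rewrite e1 ?e2 //; apply: leq_ltn_trans lt_kN; rewrite ?leq_subr // -ltnS.
Qed.

Lemma eq_uptoMl N c p q : eq_upto N p q -> eq_upto N (c * p) (c * q).
Proof. exact: eq_uptoM. Qed.

Lemma eq_uptoX N p q n : eq_upto N p q -> eq_upto N (p ^+ n) (q ^+ n).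
Proof. by move=> e; elim: n => [|n IH]; rewrite ?expr0 // !exprS; apply: eq_uptoM. Qed.

Lemma eq_upto_sum N (I : finType) (F G : I -> {poly R}) :
  (forall i, eq_upto N (F i) (G i)) -> eq_upto N (\sum_i F i) (\sum_i G i).
Proof. by move=> e; rewrite /eq_upto !take_poly_sum; apply: eq_bigr => i _; apply: e. Qed.

Lemma coef_expr_lt h n k : h`_0 = 0 -> (k < n)%N -> (h ^+ n)`_k = 0.
Proof.
move=> h0; elim: n k => [//|n IH] k lt_kn.
rewrite exprS coefM; apply: big1 => -[[|i] /= lt_ik] _; first by rewrite h0 mul0r.
by rewrite IH ?mulr0 //; lia.
Qed.

Lemma eq_upto_expr0 N c h n : h`_0 = 0 -> (N <= n)%N -> eq_upto N (c * h ^+ n) 0.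
Proof.
move=> h0 le_Nn; apply/eq_uptoP => k lt_kN; rewrite coef0 coefM big1 // => -[i /= lt_ik] _.
by rewrite coef_expr_lt ?mulr0 //; lia.
Qed.

Lemma eq_upto_comp N p h h' : eq_upto N h h' -> eq_upto N (p \Po h) (p \Po h').
Proof.
move=> e; rewrite !comp_polyE; apply: eq_upto_sum => i.
by rewrite -!mul_polyC; apply/eq_uptoMl/eq_uptoX.
Qed.

Lemma eq_upto_comp_l N p q h :
  h`_0 = 0 -> eq_upto N p q -> eq_upto N (p \Po h) (q \Po h).
Proof.
move=> h0 /eq_uptoP e; apply/eq_uptoP => k lt_kN.
apply/eqP; rewrite -subr_eq0 -coefB -comp_polyB coef_comp_poly.
apply/eqP/big1 => -[i /= _] _.
case: (ltnP i N) => [lt_iN|le_Ni]; first by rewrite coefB e ?subrr ?mul0r.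
by rewrite coef_expr_lt ?mulr0 //; apply: leq_trans le_Ni.
Qed.

End TruncatedEquality.

Section MotzkinSystem.
Context {R : comNzRingType}.
Variable N : nat.
Implicit Types (p b : {poly R}) (A B : int -> {poly R}).

Lemma coef_fib_denM p k :
  ((1 - 'X - 'X^2) * p)`_k =
  p`_k - (if k is k'.+1 then p`_k' else 0) - (if k is k'.+2 then p`_k' else 0).
Proof.
have -> : (1 - 'X - 'X^2) * p = p - 'X * p - 'X * ('X * p) by ring.
by rewrite !coefB !coefXM; case: k => // -[].
Qed.

Definition motzkin_sys b A := forall y,
  eq_upto N ((1 - 'X - 'X^2) * A y)
            (((y == 0)%:R)%:P * b + 'X * (A (y - 1) + A (y + 1))).

Lemma motzkin_sys_uniq b A B :
  motzkin_sys b A -> motzkin_sys b B -> forall y, eq_upto N (A y) (B y).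
Proof.
move=> sA sB; pose D z := A z - B z.
have hom z : forall k, (k < N)%N ->
    ((1 - 'X - 'X^2) * D z)`_k = ('X * (D (z - 1) + D (z + 1)))`_k.
  apply/eq_uptoP; rewrite /D mulrBr; apply: etrans (eq_uptoB (sA z) (sB z)) _.
  by congr take_poly; ring.
suff D0 z k : (k < N)%N -> (D z)`_k = 0.
  by move=> y; apply/eq_uptoP => k /(D0 y) /eqP; rewrite coefB subr_eq0 => /eqP.
elim/ltn_ind: k z => k IH z lt_kN; have := hom z k lt_kN.
rewrite coef_fib_denM coefXM; case: k IH lt_kN => [|k] IH lt_kN.
  by rewrite !subr0.
have Dk z' j : (j <= k)%N -> (D z')`_j = 0 by move=> le_jk; apply: IH; lia.
rewrite /= [X in _ = X -> _]coefD !(Dk _ k) // addr0 subr0.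
by case: k {IH lt_kN} Dk => [|k] Dk; rewrite ?(Dk _ k) ?subr0 // => ->.
Qed.

Lemma motzkin_sysMl c b A :
  motzkin_sys b A -> motzkin_sys (c * b) (fun y => c * A y).
Proof.
move=> sA y; rewrite mulrCA; apply: etrans (eq_uptoMl c (sA y)) _.
by congr take_poly; ring.
Qed.

Lemma motzkin_sys_abs b (a : nat -> {poly R}) :
  eq_upto N ((1 - 'X - 'X^2) * a 0%N) (b + 'X * (a 1%N + a 1%N)) ->
  (forall n, eq_upto N ((1 - 'X - 'X^2) * a n.+1) ('X * (a n + a n.+2))) ->
  motzkin_sys b (fun y => a (absz y)).
Proof.
move=> a0 aS [[|n]|n] /=; first by rewrite mul1r.
  by rewrite subn1 addn1 polyC0 mul0r add0r; apply: aS.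
have -> : absz (Negz n + 1) = n by lia.
by rewrite addn0 polyC0 mul0r add0r [a _ + _]addrC; apply: aS.
Qed.

End MotzkinSystem.

Definition gmotzkin_poly N y : {poly int} := \poly_(i < N) (gmotzkin i y)%:Z.

Lemma gmotzkin_sys N : motzkin_sys N 1 (gmotzkin_poly N).
Proof.
move=> y; apply/eq_uptoP => k lt_kN; rewrite mulr1 coef_fib_denM coefD coefC coefXM.
have lt_N j : (j <= k)%N -> (j < N)%N by move=> le_jk; apply: leq_ltn_trans lt_kN.
case: k lt_kN lt_N => [|[|k]] lt_kN lt_N; rewrite /= ?coefD !coef_poly !lt_N //; try lia.
- by rewrite gmotzkin0 !subr0; case: (y == 0).
- by rewrite gmotzkinS gmotzkin0 add0r addn0 subr0 !PoszD; ring.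
- by rewrite gmotzkinS add0r !PoszD; ring.
Qed.

Section GeometricSolution.
Context {R : comNzRingType}.
Variables (N : nat) (f v : {poly R}).
Hypothesis f_den : eq_upto N ((1 - 'X - 'X^2) * f) 'X.
Hypothesis v_quad : eq_upto N v (f + f * v ^+ 2).

Lemma motzkin_sys_geom :
  motzkin_sys N ('X * (1 - 2%:R * f * v)) (fun y => f * v ^+ absz y).
Proof.
have den n : eq_upto N ((1 - 'X - 'X^2) * (f * v ^+ n)) ('X * v ^+ n).
  by rewrite mulrA; exact: eq_uptoM f_den (erefl _).
apply: (motzkin_sys_abs (a := fun n => f * v ^+ n)) => [|n].
  by apply: etrans (den 0%N) _; congr take_poly; ring.
apply: etrans (den n.+1) _.
have -> : 'X * (f * v ^+ n + f * v ^+ n.+2) = 'X * v ^+ n * (f + f * v ^+ 2).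
  by rewrite !exprS; ring.
by rewrite exprS mulrA mulrAC; apply: eq_uptoMl.
Qed.

End GeometricSolution.

Definition trunc N (a : series) : {poly int} := \poly_(i < N) a i.

Section Truncation.
Variable N : nat.
Implicit Types a b g : series.

Lemma coef_trunc a k : (k < N)%N -> (trunc N a)`_k = a k.
Proof. by move=> lt_kN; rewrite coef_poly lt_kN. Qed.

Lemma trunc_mulS a b : eq_upto N (trunc N (mulS a b)) (trunc N a * trunc N b).
Proof.
apply/eq_uptoP => k lt_kN; rewrite coef_trunc // coefM; apply: eq_bigr => -[i /= lt_ik] _.
by rewrite !coef_trunc //; lia.
Qed.

Lemma trunc_addS a b : eq_upto N (trunc N (addS a b)) (trunc N a + trunc N b).
Proof. by apply/eq_uptoP => k lt_kN; rewrite coefD !coef_trunc. Qed.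

Lemma trunc_scaleS c a : eq_upto N (trunc N (scaleS c a)) (c%:P * trunc N a).
Proof. by apply/eq_uptoP => k lt_kN; rewrite coefCM !coef_trunc. Qed.

Lemma trunc_oneS : eq_upto N (trunc N oneS) 1.
Proof. by apply/eq_uptoP => k lt_kN; rewrite coef_trunc // coef1. Qed.

Lemma trunc_xS : eq_upto N (trunc N xS) 'X.
Proof. by apply/eq_uptoP => k lt_kN; rewrite coef_trunc // coefX. Qed.

Lemma trunc_powS a n : eq_upto N (trunc N (powS a n)) (trunc N a ^+ n).
Proof.
elim: n => [|n IH]; first exact: trunc_oneS.
by rewrite exprS; apply: etrans (trunc_mulS _ _) (eq_uptoM _ IH).
Qed.

Lemma trunc_compS c g :
  g 0%N = 0 -> eq_upto N (trunc N (compS c g)) (trunc N c \Po trunc N g).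
Proof.
move=> g0; apply/eq_uptoP => k lt_kN; rewrite coef_trunc // coef_comp_poly /compS.
have tg0 : (trunc N g)`_0 = 0 by rewrite coef_poly; case: (N) lt_kN.
have coef_pow i : (trunc N g ^+ i)`_k = powS g i k.
  by move/eq_uptoP: (trunc_powS g i) => <-; rewrite ?coef_trunc.
transitivity (\sum_(i < N) c i * powS g i k).
  rewrite (big_ord_widen N (fun i => c i * powS g i k) lt_kN) big_mkcond.
  apply: eq_bigr => -[i /= _] _; case: ltnP => // le_ki.
  by rewrite -coef_pow coef_expr_lt ?mulr0.
rewrite (big_ord_widen N (fun i => (trunc N c)`_i * (trunc N g ^+ i)`_k))
  ?size_poly // [RHS]big_mkcond.
apply: eq_bigr => -[i /= lt_iN] _; rewrite -coef_pow -(coef_trunc c lt_iN).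
by case: ltnP => // le_si; rewrite nth_default ?mul0r.
Qed.

End Truncation.

Lemma fib_gf N : eq_upto N ((1 - 'X - 'X^2) * trunc N Fser) 'X.
Proof.
apply/eq_uptoP => k lt_kN; rewrite coef_fib_denM coefX.
case: k lt_kN => [|[|k]] lt_kN; rewrite !coef_trunc //; try lia.
by rewrite /Fser /= PoszD; ring.
Qed.

Lemma catalan_mul n : (n.+1 * catalan n)%N = 'C(n.*2, n).
Proof.
rewrite /catalan mulnC divnK //; have := mul_bin_left n.*2 n.
rewrite -addnn addnK => binS_mul; apply/dvdnP.
exists ('C(n + n, n) - 'C(n + n, n.+1))%N; rewrite mulnBl.
have : ('C(n + n, n.+1) <= 'C(n + n, n))%N.
  by rewrite -(leq_pmul2l (ltn0Sn n)) binS_mul leq_mul2r leqnSn orbT.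
nia.
Qed.

Lemma catalan_rec n : (n.+2 * catalan n.+1 = (4 * n + 2) * catalan n)%N.
Proof.
have c1 := catalan_mul n.+1; have c0 := catalan_mul n.
have d1 := mul_bin_diag n.*2.+2 n; have d2 := mul_bin_diag n.*2.+1 n.
have sym : 'C(n.*2.+1, n) = 'C(n.*2.+1, n.+1).
  by rewrite -bin_sub; [congr binomial|]; lia.
rewrite doubleS in c1; rewrite /= in d1 d2.
apply/eqP; rewrite -(eqn_pmul2l (ltn0Sn n)); apply/eqP; nia.
Qed.

Lemma coef_lin_denM (a : int) (p : {poly int}) k :
  ((1 - a%:P * 'X) * p)`_k = p`_k - a * (if k is k'.+1 then p`_k' else 0).
Proof.
have -> : (1 - a%:P * 'X) * p = p - a%:P * ('X * p) by ring.
by rewrite coefB coefCM coefXM; case: k.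
Qed.

Lemma lin_ode_eq_upto0 N (a c : int) (G : {poly int}) :
  G`_0 = 0 -> eq_upto N ((1 - a%:P * 'X) * G^`()) (c%:P * G) -> eq_upto N.+1 G 0.
Proof.
move=> G0 /eq_uptoP ode; apply/eq_uptoP => k; rewrite coef0.
elim: k => [//|k IH] lt_kN; have := ode k lt_kN.
rewrite coef_lin_denM coefCM coef_deriv IH 1?ltnW //.
have -> : (if k is k'.+1 then G^`()`_k' else 0) = 0.
  by case: k IH lt_kN => // k IH lt_kN; rewrite coef_deriv IH ?mul0rn // ltnW.
by rewrite !mulr0 subr0 => /eqP; rewrite mulrn_eq0 => /eqP.
Qed.

Section CatalanGF.
Variable N : nat.
Let C := trunc N Cser.
Let A := 'X * C.

Lemma catalan_ode : eq_upto N ((1 - 4%:P * 'X) * A^`()) (1 - 2%:P * A).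
Proof.
apply/eq_uptoP => k lt_kN; rewrite /A coef_lin_denM coefB coef1 coefCM.
case: k lt_kN => [|k] lt_kN; rewrite !coef_deriv !coefXM /= !coef_trunc //; try lia.
rewrite /Cser !pmulrn !mulrzz.
have rec : (catalan k.+1 : int) * k.+2 = (catalan k : int) * (4 * k + 2)%N.
  by rewrite -!PoszM mulnC catalan_rec mulnC.
by rewrite rec PoszD PoszM; ring.
Qed.

Lemma catalan_gf : eq_upto N C (1 + 'X * C ^+ 2).
Proof.
(* G = A^2 - A + x solves (1 - 4x) G' = -4 G with G(0) = 0, hence vanishes. *)
pose G := A ^+ 2 - A + 'X.
have G0 : G`_0 = 0 by rewrite /G /A coefD coefB expr2 -mulrA !coefXM coefX.
have ode : eq_upto N ((1 - 4%:P * 'X) * G^`()) ((-4)%:P * G).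
  have -> : (1 - 4%:P * 'X) * G^`()
          = (2%:P * A - 1) * ((1 - 4%:P * 'X) * A^`()) + (1 - 4%:P * 'X).
    by rewrite /G expr2 !derivE; ring.
  apply: etrans (eq_uptoD (eq_uptoMl _ catalan_ode) (erefl _)) _.
  by congr take_poly; rewrite /G; ring.
have GX : G = 'X * ('X * C ^+ 2 - C + 1) by rewrite /G /A; ring.
apply/eq_uptoP => k lt_kN.
have /eq_uptoP/(_ k.+1 lt_kN) := lin_ode_eq_upto0 G0 ode.
rewrite GX coefXM coef0 /= coefD coefB addrAC => /subr0_eq <-.
by rewrite coefD addrC.
Qed.

End CatalanGF.

Lemma catalan_gf_comp N (h : {poly int}) : h`_0 = 0 ->
  eq_upto N (trunc N Cser \Po h) (1 + h * (trunc N Cser \Po h) ^+ 2).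
Proof.
move=> h0; apply: etrans (eq_upto_comp_l h0 (catalan_gf N)) _.
by rewrite comp_polyD comp_polyC comp_polyM comp_polyX rmorphXn.
Qed.

Section NegativeBinomial.
Context {R : comNzRingType}.

Definition flat : {poly R} := 'X + 'X^2.

Lemma flat0 : flat`_0 = 0.
Proof. by rewrite coefD coefX coefXn addr0. Qed.

Definition negbin K n : {poly R} := \sum_(l < K) 'C(n + l, l)%:R * flat ^+ l.

Lemma negbin_recS K n : (1 - flat) * negbin K.+1 n.+1
  = negbin K.+1 n - 'C(n.+1 + K, K)%:R * flat ^+ K.+1.
Proof.
elim: K => [|K IH]; first by rewrite /negbin !big_ord1 /= !addn0 !bin0; ring.
rewrite /negbin big_ord_recr [in RHS]big_ord_recr /= mulrDr IH /negbin.
have -> : 'C(n.+1 + K.+1, K.+1) = ('C(n + K.+1, K.+1) + 'C(n.+1 + K, K))%N.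
  by rewrite addnS binS addSnnS.
by rewrite natrD [flat ^+ K.+2]exprS; ring.
Qed.

Lemma negbin_rec0 K : (1 - flat) * negbin K.+1 0 = 1 - flat ^+ K.+1.
Proof.
elim: K => [|K IH]; first by rewrite /negbin big_ord1 /= bin0; ring.
rewrite /negbin big_ord_recr /= mulrDr IH add0n binn [flat ^+ K.+2]exprS; ring.
Qed.

Variable N' : nat.
Let N := N'.+1.

(* Truncation of F^(n+1)/x = x^n / (1 - x - x^2)^(n+1). *)
Definition fpow n : {poly R} := 'X ^+ n * negbin N n.

Lemma flat_high c : eq_upto N (c * flat ^+ N) 0.
Proof. exact: eq_upto_expr0 flat0 (leqnn _). Qed.

Lemma fpow_recS n : eq_upto N ((1 - flat) * fpow n.+1) ('X * fpow n).
Proof.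
have -> : (1 - flat) * fpow n.+1 = 'X ^+ n.+1 * ((1 - flat) * negbin N n.+1).
  by rewrite /fpow; ring.
rewrite negbin_recS mulrBr [_ * (_ * flat ^+ _)]mulrA.
by apply: etrans (eq_uptoB (erefl _) (flat_high _)) _; rewrite subr0 exprS -mulrA.
Qed.

Lemma fpow0 : eq_upto N ((1 - flat) * fpow 0) 1.
Proof.
rewrite /fpow expr0 mul1r negbin_rec0 -[flat ^+ _]mul1r.
by apply: etrans (eq_uptoB (erefl _) (flat_high _)) _; rewrite subr0.
Qed.

Lemma fpow_high c n : (N <= n)%N -> eq_upto N (c * fpow n) 0.
Proof.
move=> le_Nn; rewrite /fpow mulrCA mulrC.
by apply: eq_upto_expr0 _ _ le_Nn; rewrite coefX.
Qed.

Definition mclosed j : {poly R} :=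
  \sum_(m < N) 'C(2 * m + j, m)%:R * fpow (2 * m + j).

Lemma mclosed_recS j :
  eq_upto N ((1 - flat) * mclosed j.+1) ('X * (mclosed j + mclosed j.+2)).
Proof.
have lhs : eq_upto N ((1 - flat) * mclosed j.+1)
    (\sum_(m < N) 'C(2 * m + j.+1, m)%:R * ('X * fpow (2 * m + j))).
  rewrite /mclosed mulr_sumr; apply: eq_upto_sum => m; rewrite mulrCA addnS.
  exact: eq_uptoMl (fpow_recS _).
pose g m := (if m is m'.+1 then 'C(2 * m + j, m') else 0)%:R * ('X * fpow (2 * m + j)).
have shift : 'X * mclosed j.+2 = \sum_(m < N) g m + g N.
  have last_g : \sum_(m < N.+1) g m = \sum_(m < N) g m + g N := big_ord_recr N g.
  have g0 : g 0%N = 0 by rewrite /g mulr0n mul0r.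
  rewrite -last_g [RHS]big_ord_recl /= g0 add0r /mclosed mulr_sumr.
  apply: eq_bigr => m _; rewrite /g /bump /= add1n.
  have -> : (2 * m.+1 + j = 2 * m + j.+2)%N by lia.
  by rewrite mulrCA.
have gN : eq_upto N (g N) 0.
  by rewrite /g mulrA; apply: fpow_high; rewrite mul2n -addnn -addnA leq_addr.
rewrite /eq_upto lhs mulrDr shift addrA take_polyD gN take_poly0r addr0.
congr take_poly; rewrite /mclosed mulr_sumr -big_split.
apply: eq_bigr => -[[|m] _] _ /=; rewrite /g; first by rewrite !bin0; ring.
by rewrite addnS binS natrD; ring.
Qed.

Lemma mclosed_rec0 :
  eq_upto N ((1 - flat) * mclosed 0) (1 + 'X * (mclosed 1 + mclosed 1)).
Proof.
have lhs : eq_upto N ((1 - flat) * mclosed 0)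
    (1 + \sum_(m < N') 'C(2 * m.+1, m.+1)%:R * ('X * fpow (2 * m).+1)).
  rewrite /mclosed mulr_sumr big_ord_recl /= muln0 bin0 mul1r.
  apply: eq_uptoD; first exact: fpow0.
  apply: eq_upto_sum => m; rewrite /bump /= add1n addn0 mulrCA.
  have -> : (2 * m.+1 = (2 * m).+2)%N by lia.
  exact: eq_uptoMl (fpow_recS _).
have double : 'X * (mclosed 1 + mclosed 1)
    = \sum_(m < N) ('C(2 * m + 1, m) * 2)%:R * ('X * fpow (2 * m + 1)).
  by rewrite -big_split mulr_sumr; apply: eq_bigr => m _ /=; rewrite natrM; ring.
have last0 : eq_upto N (('C(2 * N' + 1, N') * 2)%:R * ('X * fpow (2 * N' + 1))) 0.
  by rewrite mulrA; apply: fpow_high; rewrite addn1 mul2n ltnS -addnn leq_addr.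
rewrite /eq_upto lhs double big_ord_recr /= addrA [RHS]take_polyD last0 take_poly0r addr0.
congr (take_poly _ (1 + _)); apply: eq_bigr => m _.
have -> : 'C(2 * m.+1, m.+1) = ('C(2 * m + 1, m) * 2)%N.
  have -> : (2 * m.+1 = (2 * m + 1).+1)%N by lia.
  rewrite binS muln2 -addnn; congr (_ + _)%N.
  by rewrite -bin_sub; [congr binomial|]; lia.
by rewrite addn1.
Qed.

Lemma mclosed_sys : motzkin_sys N 1 (fun y => mclosed (absz y)).
Proof.
have den : 1 - 'X - 'X^2 = 1 - flat :> {poly R} by rewrite /flat; ring.
by apply: motzkin_sys_abs; rewrite den; [exact: mclosed_rec0 | exact: mclosed_recS].
Qed.

End NegativeBinomial.

Lemma coef_XaddC1_exp {R : comNzRingType} l s : (('X + 1) ^+ l)`_s = 'C(l, s)%:R :> R.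
Proof.
elim: l s => [|l IH] s; first by rewrite expr0 coef1; case: s.
rewrite exprS mulrDl mul1r coefD coefXM; case: s => [|s] /=; rewrite !IH.
  by rewrite add0r !bin0.
by rewrite binS natrD addrC.
Qed.

Lemma coef_flat_exp {R : comNzRingType} l t :
  (flat ^+ l)`_t = if (t < l)%N then 0 else 'C(l, t - l)%:R :> R.
Proof.
have -> : flat ^+ l = 'X^l * ('X + 1) ^+ l :> {poly R}.
  by rewrite -exprMn /flat; congr (_ ^+ _); ring.
by rewrite coefXnM coef_XaddC1_exp.
Qed.

Lemma coef_fpow {R : comNzRingType} N' n t : (fpow N' n : {poly R})`_t =
  if (t < n)%N then 0
  else \sum_(l < N'.+1) (if (t - n < l)%N then 0 else 'C(l, t - n - l)%:R) *+ 'C(n + l, l).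
Proof.
rewrite /fpow coefXnM; case: ifP => // _.
by rewrite /negbin coef_sum; apply: eq_bigr => l _; rewrite mulr_natl coefMn coef_flat_exp.
Qed.

Lemma g2_mclosed i j : (g2 i j)%:Z = (mclosed i j : {poly int})`_i.
Proof.
rewrite g2E.
have /eq_uptoP/(_ i (ltnSn i)) := motzkin_sys_uniq (gmotzkin_sys i.+1) (mclosed_sys i) j.
by rewrite coef_poly ltnSn.
Qed.

Lemma g2_formula i j : (j <= i)%N ->
  g2 i j = (\sum_(m < i.+1 | j + 2 * m <= i) \sum_(l < (i - j - 2 * m).+1)
              'C(2 * m + j, m) * 'C(l + j + 2 * m, l) * 'C(l, i - j - 2 * m - l))%N.
Proof.
move=> le_ji; apply/eqP; rewrite -eqz_nat g2_mclosed -natz; apply/eqP.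
rewrite /mclosed coef_sum natr_sum [RHS]big_mkcond /=.
apply: eq_bigr => m _; rewrite mulr_natl coefMn coef_fpow.
case: ltnP => [lt_i|le_i]; first by rewrite mul0rn ifN //; lia.
rewrite ifT; last by lia.
set t := (i - (2 * m + j))%N.
have -> : (i - j - 2 * m = t)%N by rewrite /t; lia.
rewrite natr_sum -sumrMnl.
rewrite (big_ord_widen i.+1
  (fun l => ('C(2 * m + j, m) * 'C(l + j + 2 * m, l) * 'C(l, t - l))%N%:R : int));
  last by rewrite /t; lia.
rewrite [RHS]big_mkcond; apply: eq_bigr => l _ /=.
rewrite ltnS; case: leqP => _; last by rewrite !mul0rn.
have -> : (2 * m + j + l = l + j + 2 * m)%N by lia.
by rewrite -!mulrnA; congr (_%:R); lia.
Qed.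

Lemma trunc_Mser N j : trunc N (Mser j) = gmotzkin_poly N j.
Proof. by apply/polyP => i; rewrite !coef_poly /Mser g2E. Qed.

Section GeneratingFunction.
Variable N : nat.
Let f := trunc N Fser.
Let v := f * (trunc N Cser \Po f ^+ 2).

Lemma fib_sqr0 : (f ^+ 2)`_0 = 0.
Proof. by rewrite expr2 coefM big_ord1 coef_poly; case: (N); rewrite ?mul0r. Qed.

Lemma v_quad : eq_upto N v (f + f * v ^+ 2).
Proof.
apply: etrans (eq_uptoMl f (catalan_gf_comp N fib_sqr0)) _.
by rewrite /v; congr take_poly; ring.
Qed.

Lemma gmotzkin_gf (j : nat) :
  eq_upto N ('X * (1 - 2%:R * f * v) * gmotzkin_poly N j) (f * v ^+ j).
Proof.
have sM := motzkin_sysMl ('X * (1 - 2%:R * f * v)) (gmotzkin_sys N).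
rewrite mulr1 in sM.
exact: motzkin_sys_uniq sM (motzkin_sys_geom (fib_gf N) v_quad) j.
Qed.

End GeneratingFunction.

Lemma trunc_CF2 N : eq_upto N (trunc N (compS Cser (powS Fser 2)))
                              (trunc N Cser \Po trunc N Fser ^+ 2).
Proof.
have F2_0 : powS Fser 2 0%N = 0 by rewrite /powS /= /mulS !big_ord1 mul0r.
by apply: etrans (trunc_compS _ _ F2_0) _; apply/eq_upto_comp/trunc_powS.
Qed.

Lemma Mser_gf j n :
  let CF2 := compS Cser (powS Fser 2) in
  mulS (mulS xS (Mser j)) (addS oneS (scaleS (-2) (mulS (powS Fser 2) CF2))) n
  = mulS (powS Fser j.+1) (powS CF2 j) n.
Proof.
move=> CF2; set N := n.+1; set f := trunc N Fser; set c2 := trunc N Cser \Po f ^+ 2.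
have tCF2 : eq_upto N (trunc N CF2) c2 := trunc_CF2 N.
have tXM : eq_upto N (trunc N (mulS xS (Mser j))) ('X * gmotzkin_poly N j).
  by rewrite -trunc_Mser; apply: etrans (trunc_mulS _ _ _) (eq_uptoM (trunc_xS _) (erefl _)).
have tden : eq_upto N (trunc N (addS oneS (scaleS (-2) (mulS (powS Fser 2) CF2))))
                      (1 + (-2)%:P * (f ^+ 2 * c2)).
  apply: etrans (trunc_addS _ _ _) (eq_uptoD (trunc_oneS _) _).
  apply: etrans (trunc_scaleS _ _ _) (eq_uptoMl _ _).
  exact: etrans (trunc_mulS _ _ _) (eq_uptoM (trunc_powS _ _ _) tCF2).
have tR : eq_upto N (trunc N (mulS (powS Fser j.+1) (powS CF2 j))) (f * (f * c2) ^+ j).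
  apply: etrans (trunc_mulS _ _ _) _.
  apply: etrans (eq_uptoM (trunc_powS _ _ _) (etrans (trunc_powS _ _ _) (eq_uptoX _ tCF2))) _.
  by rewrite exprMn exprS mulrA.
rewrite -(coef_trunc _ (ltnSn n)) -[RHS](coef_trunc _ (ltnSn n)).
apply: (eq_uptoP _ _ _).1 (ltnSn n).
apply: etrans (trunc_mulS _ _ _) (etrans (eq_uptoM tXM tden) _).
apply: etrans (etrans _ (gmotzkin_gf N j)) (esym tR).
by congr take_poly; rewrite -/f -/c2 polyCN polyC_natr; ring.
Qed.

Theorem theorem2p2 :
  (forall j : nat, forall n : nat,
     let CF2 := compS Cser (powS Fser 2) in
     mulS (mulS xS (Mser j))
          (addS oneS (scaleS (-2) (mulS (powS Fser 2) CF2))) n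
     = mulS (powS Fser j.+1) (powS CF2 j) n)
  /\
  (forall i j : nat, (j <= i)%N ->
     g2 i j =
     (\sum_(m < i.+1 | j + 2 * m <= i)
        \sum_(l < (i - j - 2 * m).+1)
           'C(2 * m + j, m) * 'C(l + j + 2 * m, l) * 'C(l, i - j - 2 * m - l))%N).
Proof. by split; [exact: Mser_gf | exact: g2_formula]. Qed.
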